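(* Let $\mathcal R=(c_0,|||\cdot|||)$ be Read's space (defined in the context). Under the canonical identification of the bidual $\mathcal R^{**}$ with $\ell_\infty$ (coming from $c_0^{**}=\ell_\infty$ as vector spaces, the norm $|||\cdot|||$ being equivalent to $\|\cdot\|_\infty$), the bidual norm of $\mathcal R^{**}$ is given, for every $\bar x\in\ell_\infty$, by the same formula $$|||\bar x||| = \|\bar x\|_\infty + \sum_{n \in \mathbb N} 2^{-a_n^2}\left|\langle \bar x, u_n - e_{a_n} \rangle\right|.$$ That is, $\mathcal R^{**}$ is isometric to $\ell_\infty$ equipped with this norm.
   Context: Let $c_{00}(\mathbb Q)$ be the set of finitely supported sequences with rational coefficients, and let $(u_n)_{n\in\mathbb N}$ be a sequence in $c_{00}(\mathbb Q)$ which lists every element of $c_{00}(\mathbb Q)$ infinitely many times. Let $(a_n)_{n\in\mathbb N}$ be a strictly increasing sequence of positive integers with $a_n>\max\operatorname{supp} u_n$ and $a_n>\|u_n\|_1$ for every $n$. $(e_n)$ denotes the canonical unit vectors and $\langle x,y\rangle=\sum_n x_ny_n$ for $x\in\ell_\infty$, $y\in\ell_1$. Read's norm on $c_0$ is $|||x||| = \|x\|_\infty + \sum_{n} 2^{-a_n^2}|\langle x, u_n - e_{a_n}\rangle|$ for $x\in c_0$; it satisfies $\|x\|_\infty\le|||x|||\le 3\|x\|_\infty$, and Read's space is $\mathcal R=(c_0,|||\cdot|||)$. All spaces are real. *)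

From Stdlib Require Import Reals QArith.
From Coquelicot Require Import Coquelicot.
Open Scope R_scope.

Definition in_c0 (x : nat -> R) : Prop := is_lim_seq x 0.

Definition in_linf (x : nat -> R) : Prop := exists M : R, forall n, Rabs (x n) <= M.

Definition in_l1 (y : nat -> R) : Prop := ex_series (fun n => Rabs (y n)).

Definition pairing (x y : nat -> R) : R := Series (fun n => x n * y n).

Definition supnorm (x : nat -> R) : R :=
  real (Lub_Rbar (fun r => exists n, r = Rabs (x n))).

Definition unitvec (m : nat) : nat -> R := fun k => if Nat.eqb k m then 1 else 0.

Definition fin_supp {T} (z0 : T) (v : nat -> T) : Prop :=
  exists N : nat, forall k, (N <= k)%nat -> v k = z0.

(* Hypotheses on the data (u_n), (a_n) of Read's construction.
   u n : nat -> R is the n-th element of c00(Q) (real values that are rationals). *)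
Definition read_data (u : nat -> nat -> R) (a : nat -> nat) : Prop :=
  (forall n k, exists q : Q, u n k = Q2R q) /\
  (forall v : nat -> Q, fin_supp 0%Q v ->
     forall m : nat, exists n : nat, (m <= n)%nat /\ forall k, u n k = Q2R (v k)) /\
  (forall n, (0 < a n)%nat) /\
  (forall n, (a n < a (S n))%nat) /\
  (forall n k, u n k <> 0 -> (k < a n)%nat) /\
  (forall n, Series (fun k => Rabs (u n k)) < INR (a n)).

Definition read_norm (u : nat -> nat -> R) (a : nat -> nat) (x : nat -> R) : R :=
  supnorm x +
  Series (fun n => (/ 2) ^ (a n * a n) *
                   Rabs (pairing x (fun k => u n k - unitvec (a n) k))).

(* Dual unit ball of R = (c0, |||.|||), identified with l_1 via c0^* = l_1:
   y in l_1 with |<x,y>| <= |||x||| for all x in c0. *)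
Definition dual_ball (u : nat -> nat -> R) (a : nat -> nat) (y : nat -> R) : Prop :=
  in_l1 y /\ forall x, in_c0 x -> Rabs (pairing x y) <= read_norm u a x.

Definition bidual_norm (u : nat -> nat -> R) (a : nat -> nat) (xbar : nat -> R) : Rbar :=
  Lub_Rbar (fun r => exists y, dual_ball u a y /\ r = Rabs (pairing xbar y)).

From Stdlib Require Import Reals QArith Lra Lia.
From Coquelicot Require Import Coquelicot.
Open Scope R_scope.

(* Upper bound: the truncations of xbar lie in c_0 and converge to xbar against every y in
   l_1.  Once the truncation point passes a_K, the terms of index n <= K in their Read norm agree
   with those of xbar, while the terms of index n > K are at most ||xbar|| 4^-n because
   2^(-a_n^2) (a_n + 1) <= 4^-n; hence |<xbar, y>| <= |||xbar||| + 2 ||xbar|| 2^-K for every K.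
   Lower bound: the finitely supported functionals +-e_k + sum_(n <= J) +-2^(-a_n^2) (u_n - e_(a_n))
   lie in the dual ball by the triangle inequality, and with the right signs their value at xbar
   is |xbar_k| + sum_(n <= J) 2^(-a_n^2) |<xbar, u_n - e_(a_n)>|, which approaches |||xbar|||. *)

Lemma sign_mul_self x : sign x * x = Rabs x.
Proof.
  destruct (Rtotal_order x 0) as [Hx | [-> | Hx]].
  - rewrite sign_eq_m1, Rabs_left by exact Hx; ring.
  - rewrite sign_0, Rabs_R0; ring.
  - rewrite sign_eq_1, Rabs_right by lra; ring.
Qed.

Lemma Rabs_sign_le_1 x : Rabs (sign x) <= 1.
Proof.
  destruct (Rtotal_order x 0) as [Hx | [-> | Hx]].
  - rewrite sign_eq_m1 by exact Hx; rewrite Rabs_left; lra.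
  - rewrite sign_0, Rabs_R0; lra.
  - rewrite sign_eq_1, Rabs_R1 by exact Hx; lra.
Qed.

Lemma is_lub_Rbar_of_approx (E : R -> Prop) (m : R) :
  (forall r, E r -> r <= m) -> (forall d, 0 < d -> exists r, E r /\ m - d < r) ->
  is_lub_Rbar E m.
Proof.
  intros Hub Happrox; split; [exact Hub |].
  intros [b | |] Hb; simpl; trivial.
  - apply Rnot_lt_le; intros Hbm.
    destruct (Happrox (m - b)) as [r [Hr Hlt]]; [lra |].
    specialize (Hb r Hr); simpl in Hb; lra.
  - destruct (Happrox 1 Rlt_0_1) as [r [Hr _]]; exact (Hb r Hr).
Qed.

Lemma is_lub_Rbar_approx (E : R -> Prop) (m d : R) :
  is_lub_Rbar E m -> 0 < d -> exists r, E r /\ m - d < r.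
Proof.
  intros [_ Hlub] Hd. apply Classical_Prop.NNPP; intros Hnone.
  assert (Hub : is_ub_Rbar E (m - d)).
  { intros r Hr; simpl; apply Rnot_lt_le; intros Hlt; apply Hnone; eauto. }
  specialize (Hlub _ Hub); simpl in Hlub; lra.
Qed.

Lemma is_lub_supnorm x :
  in_linf x -> is_lub_Rbar (fun r => exists n, r = Rabs (x n)) (supnorm x).
Proof.
  intros [M HM]. unfold supnorm.
  assert (Hlub := Lub_Rbar_correct (fun r => exists n, r = Rabs (x n))).
  destruct (Lub_Rbar _) as [s | |]; [exact Hlub | exfalso ..].
  - apply (proj2 Hlub M). intros r [n ->]; apply HM.
  - apply (proj1 Hlub (Rabs (x 0%nat))); eauto.
Qed.

Lemma supnorm_ge x n : in_linf x -> Rabs (x n) <= supnorm x.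
Proof. intros Hx; exact (proj1 (is_lub_supnorm x Hx) _ (ex_intro _ n eq_refl)). Qed.

Lemma supnorm_le x B : in_linf x -> (forall n, Rabs (x n) <= B) -> supnorm x <= B.
Proof. intros Hx HB; apply (proj2 (is_lub_supnorm x Hx) B); intros r [n ->]; apply HB. Qed.

Lemma in_c0_linf x : in_c0 x -> in_linf x.
Proof.
  intros Hx.
  assert (Habs : Un_cv (fun n => Rabs (x n)) 0).
  { apply is_lim_seq_Reals. apply is_lim_seq_abs in Hx. simpl in Hx. now rewrite Rabs_R0 in Hx. }
  destruct (cauchy_bound _ (CV_Cauchy _ (exist _ 0 Habs))) as [M HM].
  exists M; intros n; apply HM; exists n; reflexivity.
Qed.

Lemma sum_Sn_R (f : nat -> R) n : sum_n f (S n) = sum_n f n + f (S n).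
Proof. exact (@sum_Sn R_AbelianMonoid f n). Qed.

Lemma Rabs_sum_n_le (f g : nat -> R) J :
  (forall n, Rabs (f n) <= g n) -> Rabs (sum_n f J) <= sum_n g J.
Proof. intros H. eapply Rle_trans; [apply (norm_sum_n_m f 0 J) | apply sum_n_m_le; exact H]. Qed.

Lemma is_lim_seq_sum_n_Series (f : nat -> R) :
  ex_series f -> is_lim_seq (sum_n f) (Series f).
Proof. intros Hex; exact (Series_correct _ Hex). Qed.

Lemma sum_n_le_Series (f : nat -> R) J :
  (forall n, 0 <= f n) -> ex_series f -> sum_n f J <= Series f.
Proof.
  intros Hf Hex.
  refine (is_lim_seq_le_loc (fun _ => sum_n f J) (sum_n f) _ _ _
            (is_lim_seq_const _) (is_lim_seq_sum_n_Series f Hex)).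
  exists J; intros n Hn. replace n with (J + (n - J))%nat by lia.
  induction (n - J)%nat as [| p IH]; [rewrite Nat.add_0_r; lra |].
  rewrite Nat.add_succ_r, sum_Sn_R. specialize (Hf (S (J + p))); lra.
Qed.

Lemma sum_n_fin_supp (f : nat -> R) N n :
  (forall k, (N < k)%nat -> f k = 0) -> (N <= n)%nat -> sum_n f n = sum_n f N.
Proof.
  intros Hf Hn. replace n with (N + (n - N))%nat by lia.
  induction (n - N)%nat as [| p IH]; [now rewrite Nat.add_0_r |].
  rewrite Nat.add_succ_r, sum_Sn_R, IH, Hf by lia. apply Rplus_0_r.
Qed.

Lemma is_series_fin_supp (f : nat -> R) N :
  (forall k, (N < k)%nat -> f k = 0) -> is_series f (sum_n f N).
Proof.
  intros Hf. apply (filterlim_ext_loc (fun _ => sum_n f N)); [| apply filterlim_const].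
  exists N; intros n Hn; symmetry; exact (sum_n_fin_supp f N n Hf Hn).
Qed.

Lemma Series_fin_supp (f : nat -> R) N :
  (forall k, (N < k)%nat -> f k = 0) -> Series f = sum_n f N.
Proof. intros Hf; apply is_series_unique, is_series_fin_supp, Hf. Qed.

Lemma fin_supp_in_l1 y : fin_supp 0 y -> in_l1 y.
Proof.
  intros [N HN]. exists (sum_n (fun k => Rabs (y k)) N).
  apply is_series_fin_supp. intros k Hk; rewrite HN by lia; apply Rabs_R0.
Qed.

Lemma unitvec_l1 m : in_l1 (unitvec m).
Proof.
  apply fin_supp_in_l1; exists (S m); intros k Hk; unfold unitvec.
  now rewrite (proj2 (Nat.eqb_neq k m)) by lia.
Qed.

Lemma in_l1_plus y z : in_l1 y -> in_l1 z -> in_l1 (fun k => y k + z k).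
Proof.
  intros Hy Hz.
  apply (@ex_series_le R_AbsRing R_CompleteNormedModule _ (fun k => Rabs (y k) + Rabs (z k))).
  - intros k; change norm with Rabs; simpl; rewrite Rabs_Rabsolu; apply Rabs_triang.
  - exact (ex_series_plus _ _ Hy Hz).
Qed.

Lemma in_l1_scal c y : in_l1 y -> in_l1 (fun k => c * y k).
Proof.
  intros Hy. apply (ex_series_ext (fun k => Rabs c * Rabs (y k))).
  - intros k; symmetry; apply Rabs_mult.
  - exact (ex_series_scal_l (Rabs c) _ Hy).
Qed.

Lemma in_l1_sum_n (f : nat -> nat -> R) J :
  (forall n, in_l1 (f n)) -> in_l1 (fun k => sum_n (fun n => f n k) J).
Proof.
  intros Hf. induction J as [| J IH].
  - apply (ex_series_ext (fun k => Rabs (f 0%nat k))); [| apply Hf].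
    intros k; now rewrite sum_O.
  - apply (ex_series_ext (fun k => Rabs (sum_n (fun n => f n k) J + f (S J) k))).
    + intros k; now rewrite sum_Sn_R.
    + exact (in_l1_plus _ _ IH (Hf (S J))).
Qed.

Lemma ex_series_abs_pairing x y B :
  (forall k, Rabs (x k) <= B) -> in_l1 y -> ex_series (fun k => Rabs (x k * y k)).
Proof.
  intros HB Hy.
  apply (@ex_series_le R_AbsRing R_CompleteNormedModule _ (fun k => B * Rabs (y k))).
  - intros k; change norm with Rabs; simpl.
    rewrite Rabs_Rabsolu, Rabs_mult. apply Rmult_le_compat_r; [apply Rabs_pos | apply HB].
  - exact (ex_series_scal_l B _ Hy).
Qed.

Lemma ex_series_pairing x y : in_linf x -> in_l1 y -> ex_series (fun k => x k * y k).
Proof. intros [B HB] Hy; exact (ex_series_Rabs _ (ex_series_abs_pairing x y B HB Hy)). Qed.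

Lemma pairing_abs_le x y B :
  (forall k, Rabs (x k) <= B) -> in_l1 y ->
  Rabs (pairing x y) <= B * Series (fun k => Rabs (y k)).
Proof.
  intros HB Hy. unfold pairing. rewrite <- Series_scal_l.
  eapply Rle_trans; [apply Series_Rabs, (ex_series_abs_pairing x y B HB Hy) |].
  apply Series_le; [| exact (ex_series_scal_l B _ Hy)].
  intros k; split; [apply Rabs_pos |].
  rewrite Rabs_mult. apply Rmult_le_compat_r; [apply Rabs_pos | apply HB].
Qed.

Lemma pairing_plus x y z : in_linf x -> in_l1 y -> in_l1 z ->
  pairing x (fun k => y k + z k) = pairing x y + pairing x z.
Proof.
  intros Hx Hy Hz. unfold pairing.
  rewrite <- Series_plus by (apply ex_series_pairing; assumption).
  apply Series_ext; intros k; ring.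
Qed.

Lemma pairing_minus x y z : in_linf x -> in_l1 y -> in_l1 z ->
  pairing x (fun k => y k - z k) = pairing x y - pairing x z.
Proof.
  intros Hx Hy Hz. unfold pairing.
  rewrite <- Series_minus by (apply ex_series_pairing; assumption).
  apply Series_ext; intros k; ring.
Qed.

Lemma pairing_scal x c y : pairing x (fun k => c * y k) = c * pairing x y.
Proof. unfold pairing; rewrite <- Series_scal_l; apply Series_ext; intros k; ring. Qed.

Lemma pairing_sum_n x (f : nat -> nat -> R) J :
  in_linf x -> (forall n, in_l1 (f n)) ->
  pairing x (fun k => sum_n (fun n => f n k) J) = sum_n (fun n => pairing x (f n)) J.
Proof.
  intros Hx Hf. induction J as [| J IH].
  - rewrite sum_O. apply Series_ext; intros k; now rewrite sum_O.
  - rewrite sum_Sn_R, <- IH, <- pairing_plus by auto using in_l1_sum_n.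
    apply Series_ext; intros k; now rewrite sum_Sn_R.
Qed.

Lemma pairing_unitvec x m : pairing x (unitvec m) = x m.
Proof.
  unfold pairing, unitvec. rewrite (Series_incr_n_aux _ m).
  - rewrite (Series_fin_supp _ 0), sum_O, Nat.add_0_r, Nat.eqb_refl; [ring |].
    intros k Hk. rewrite (proj2 (Nat.eqb_neq (m + k) m)) by lia. ring.
  - intros k Hk. rewrite (proj2 (Nat.eqb_neq k m)) by lia. ring.
Qed.

Lemma pairing_ext_supp x x' y N :
  (forall k, (k <= N)%nat -> x k = x' k) -> (forall k, (N < k)%nat -> y k = 0) ->
  pairing x y = pairing x' y.
Proof.
  intros Hxx' Hy. unfold pairing.
  rewrite (Series_fin_supp _ N), (Series_fin_supp (fun k => x' k * y k) N)
    by (intros k Hk; rewrite Hy by exact Hk; ring).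
  apply sum_n_ext_loc; intros k Hk; now rewrite Hxx'.
Qed.

Definition trunc (j : nat) (x : nat -> R) : nat -> R :=
  fun k => if Nat.leb k j then x k else 0.

Lemma trunc_c0 j x : in_c0 (trunc j x).
Proof.
  apply (is_lim_seq_ext_loc (fun _ => 0)); [| apply is_lim_seq_const].
  exists (S j); intros k Hk; unfold trunc.
  now rewrite (proj2 (Nat.leb_gt k j)) by lia.
Qed.

Lemma Rabs_trunc_le j x B : (forall k, Rabs (x k) <= B) -> forall k, Rabs (trunc j x k) <= B.
Proof.
  intros HB k; unfold trunc; destruct (Nat.leb k j); [apply HB |].
  rewrite Rabs_R0; exact (Rle_trans _ _ _ (Rabs_pos _) (HB 0%nat)).
Qed.

Lemma is_lim_seq_pairing_trunc x y : in_linf x -> in_l1 y ->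
  is_lim_seq (fun j => pairing (trunc j x) y) (pairing x y).
Proof.
  intros Hx Hy.
  apply (is_lim_seq_ext (sum_n (fun k => x k * y k))).
  - intros j; unfold pairing.
    rewrite (Series_fin_supp _ j).
    + apply sum_n_ext_loc; intros k Hk; unfold trunc; now rewrite (proj2 (Nat.leb_le k j)).
    + intros k Hk; unfold trunc; rewrite (proj2 (Nat.leb_gt k j)) by exact Hk; ring.
  - exact (is_lim_seq_sum_n_Series _ (ex_series_pairing x y Hx Hy)).
Qed.

Lemma weight_ineq_nat A n : (S n <= A)%nat -> ((A + 1) * 4 ^ n <= 2 ^ (A * A))%nat.
Proof.
  intros HA.
  assert (HA2 : (A < 2 ^ A)%nat) by (apply Nat.pow_gt_lin_r; lia).
  replace (4 ^ n)%nat with (2 ^ (2 * n))%nat by (rewrite Nat.pow_mul_r; reflexivity).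
  transitivity (2 ^ A * 2 ^ (2 * n))%nat; [apply Nat.mul_le_mono_r; lia |].
  rewrite <- Nat.pow_add_r. apply Nat.pow_le_mono_r; [lia |].
  assert (A * S n <= A * A)%nat by (apply Nat.mul_le_mono_l; exact HA).
  destruct n; nia.
Qed.

Lemma weight_ineq A n : (S n <= A)%nat -> (/ 2) ^ (A * A) * (INR A + 1) <= (/ 4) ^ n.
Proof.
  intros HA. assert (H := le_INR _ _ (weight_ineq_nat A n HA)).
  rewrite mult_INR, plus_INR, !pow_INR in H.
  replace (INR 1) with 1 in H by reflexivity.
  replace (INR 2) with 2 in H by (simpl; lra). replace (INR 4) with 4 in H by (simpl; lra).
  assert (H2 : 0 < 2 ^ (A * A)) by (apply pow_lt; lra).
  assert (H4 : 0 < 4 ^ n) by (apply pow_lt; lra).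
  rewrite !pow_inv.
  apply (Rmult_le_reg_r (2 ^ (A * A) * 4 ^ n)); [nra |].
  replace (/ 2 ^ (A * A) * (INR A + 1) * (2 ^ (A * A) * 4 ^ n)) with ((INR A + 1) * 4 ^ n)
    by (field; lra).
  replace (/ 4 ^ n * (2 ^ (A * A) * 4 ^ n)) with (2 ^ (A * A)) by (field; lra).
  exact H.
Qed.

Section ReadNorm.

Variables (u : nat -> nat -> R) (a : nat -> nat).
Hypothesis a_pos : forall n, (0 < a n)%nat.
Hypothesis a_incr : forall n, (a n < a (S n))%nat.
Hypothesis u_supp : forall n k, u n k <> 0 -> (k < a n)%nat.
Hypothesis u_l1_lt : forall n, Series (fun k => Rabs (u n k)) < INR (a n).

Definition read_vec (n : nat) : nat -> R := fun k => u n k - unitvec (a n) k.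

Definition read_weight (n : nat) : R := (/ 2) ^ (a n * a n).

Definition read_term (x : nat -> R) (n : nat) : R :=
  read_weight n * Rabs (pairing x (read_vec n)).

Lemma read_norm_unfold x : read_norm u a x = supnorm x + Series (read_term x).
Proof. reflexivity. Qed.

Lemma a_ge_succ n : (S n <= a n)%nat.
Proof. induction n as [| n IH]; [apply a_pos | specialize (a_incr n); lia]. Qed.

Lemma a_monotone n m : (n <= m)%nat -> (a n <= a m)%nat.
Proof. induction 1 as [| m _ IH]; [lia | specialize (a_incr m); lia]. Qed.

Lemma u_vanish n k : (a n <= k)%nat -> u n k = 0.
Proof.
  intros Hk. destruct (Req_dec (u n k) 0) as [E | E]; [exact E |].
  apply u_supp in E; lia.
Qed.

Lemma read_vec_vanish n k : (a n < k)%nat -> read_vec n k = 0.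
Proof.
  intros Hk. unfold read_vec, unitvec.
  rewrite u_vanish, (proj2 (Nat.eqb_neq k (a n))) by lia. ring.
Qed.

Lemma u_l1 n : in_l1 (u n).
Proof. apply fin_supp_in_l1; exists (a n); exact (u_vanish n). Qed.

Lemma read_vec_l1 n : in_l1 (read_vec n).
Proof. apply fin_supp_in_l1; exists (S (a n)); intros k Hk; apply read_vec_vanish; lia. Qed.

Lemma pairing_read_vec_le x B n : (forall k, Rabs (x k) <= B) ->
  Rabs (pairing x (read_vec n)) <= B * (INR (a n) + 1).
Proof.
  intros HB.
  assert (Hx : in_linf x) by (exists B; exact HB).
  assert (Hu := pairing_abs_le x (u n) B HB (u_l1 n)).
  assert (Hl1 := u_l1_lt n).
  assert (HB0 : 0 <= B) by exact (Rle_trans _ _ _ (Rabs_pos _) (HB 0%nat)).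
  unfold read_vec. rewrite pairing_minus, pairing_unitvec by auto using u_l1, unitvec_l1.
  eapply Rle_trans; [apply Rabs_triang |]. rewrite Rabs_Ropp.
  specialize (HB (a n)). nra.
Qed.

Lemma read_term_bound x B n : (forall k, Rabs (x k) <= B) ->
  0 <= read_term x n <= B * (/ 4) ^ n.
Proof.
  intros HB.
  assert (HB0 : 0 <= B) by exact (Rle_trans _ _ _ (Rabs_pos _) (HB 0%nat)).
  assert (Hw := weight_ineq (a n) n (a_ge_succ n)).
  assert (Hp := pairing_read_vec_le x B n HB).
  assert (Hw0 : 0 < read_weight n) by (apply pow_lt; lra).
  unfold read_term; split; [apply Rmult_le_pos; [lra | apply Rabs_pos] |].
  apply Rle_trans with (read_weight n * (B * (INR (a n) + 1))); [apply Rmult_le_compat_l; lra |].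
  unfold read_weight in *. nra.
Qed.

Lemma ex_series_read_term x B : (forall k, Rabs (x k) <= B) -> ex_series (read_term x).
Proof.
  intros HB.
  apply (@ex_series_le R_AbsRing R_CompleteNormedModule _ (fun n => B * (/ 4) ^ n)).
  - intros n; change norm with Rabs; simpl.
    destruct (read_term_bound x B n HB). rewrite Rabs_pos_eq; lra.
  - exists (B * / (1 - / 4)). apply (is_series_scal_l B (fun n => (/ 4) ^ n)), is_series_geom.
    rewrite Rabs_pos_eq; lra.
Qed.

Lemma read_term_trunc x j n : (a n <= j)%nat -> read_term (trunc j x) n = read_term x n.
Proof.
  intros Hj. unfold read_term. do 2 f_equal.
  apply (pairing_ext_supp _ _ _ (a n)); [| exact (read_vec_vanish n)].
  intros k Hk; unfold trunc; now rewrite (proj2 (Nat.leb_le k j)) by lia.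
Qed.

Lemma Series_read_term_trunc_le x s j K : (forall k, Rabs (x k) <= s) -> (a K <= j)%nat ->
  Series (read_term (trunc j x)) <= Series (read_term x) + 2 * s * (/ 2) ^ K.
Proof.
  intros Hs Hj.
  assert (Hs0 : 0 <= s) by exact (Rle_trans _ _ _ (Rabs_pos _) (Hs 0%nat)).
  assert (HK : 0 < (/ 2) ^ K) by (apply pow_lt; lra).
  assert (Hgeom : is_series (fun n => s * (/ 2) ^ K * (/ 2) ^ n) (s * (/ 2) ^ K * / (1 - / 2))).
  { apply (is_series_scal_l (s * (/ 2) ^ K) (fun n => (/ 2) ^ n)), is_series_geom.
    rewrite Rabs_pos_eq; lra. }
  assert (Hex := ex_series_read_term x s Hs).
  apply Rle_trans with (Series (fun n => read_term x n + s * (/ 2) ^ K * (/ 2) ^ n)).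
  - apply Series_le; [| exact (ex_series_plus _ _ Hex (ex_intro _ _ Hgeom))].
    intros n.
    destruct (read_term_bound (trunc j x) s n (Rabs_trunc_le j x s Hs)) as [Ht0 Ht].
    destruct (read_term_bound x s n Hs) as [Hx0 _].
    assert (Hn : 0 < (/ 2) ^ n) by (apply pow_lt; lra).
    split; [exact Ht0 |].
    destruct (Compare_dec.le_lt_dec n K) as [HnK | HKn].
    + rewrite read_term_trunc by (pose proof (a_monotone n K HnK); lia).
      assert (0 <= s * (/ 2) ^ K * (/ 2) ^ n) by (apply Rmult_le_pos; [apply Rmult_le_pos |]; lra).
      lra.
    + replace ((/ 4) ^ n) with ((/ 2) ^ n * (/ 2) ^ n) in Ht
        by (rewrite <- Rpow_mult_distr; f_equal; field).
      assert ((/ 2) ^ n <= (/ 2) ^ K).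
      { rewrite !pow_inv. apply Rinv_le_contravar; [apply pow_lt; lra |].
        apply Rle_pow; lra || lia. }
      nra.
  - rewrite Series_plus, (is_series_unique _ _ Hgeom); [| exact Hex | exact (ex_intro _ _ Hgeom)].
    replace (/ (1 - / 2)) with 2 by field. lra.
Qed.

Lemma read_norm_trunc_le x j K : in_linf x -> (a K <= j)%nat ->
  read_norm u a (trunc j x) <= read_norm u a x + 2 * supnorm x * (/ 2) ^ K.
Proof.
  intros Hx Hj. rewrite !read_norm_unfold.
  assert (Hs := fun k => supnorm_ge x k Hx).
  assert (Htr := Rabs_trunc_le j x _ Hs).
  assert (supnorm (trunc j x) <= supnorm x) by (apply supnorm_le; [exists (supnorm x) |]; exact Htr).
  pose proof (Series_read_term_trunc_le x _ j K Hs Hj). lra.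
Qed.

Lemma pairing_le_read_norm_plus xbar y K : in_linf xbar -> dual_ball u a y ->
  Rabs (pairing xbar y) <= read_norm u a xbar + 2 * supnorm xbar * (/ 2) ^ K.
Proof.
  intros Hx [Hy Hball].
  assert (Hlim := is_lim_seq_abs _ _ (is_lim_seq_pairing_trunc xbar y Hx Hy)).
  refine (is_lim_seq_le_loc _ _ _ _ _ Hlim (is_lim_seq_const _)).
  exists (a K); intros j Hj.
  eapply Rle_trans; [apply Hball, trunc_c0 | apply read_norm_trunc_le; assumption].
Qed.

Lemma pairing_le_read_norm xbar y : in_linf xbar -> dual_ball u a y ->
  Rabs (pairing xbar y) <= read_norm u a xbar.
Proof.
  intros Hx Hy.
  assert (Hhalf : Rabs (/ 2) < 1) by (rewrite Rabs_pos_eq; lra).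
  assert (Hlim := is_lim_seq_plus' _ _ _ _ (is_lim_seq_const (read_norm u a xbar))
                    (is_lim_seq_scal_l _ (2 * supnorm xbar) _ (is_lim_seq_geom _ Hhalf))).
  assert (Hle := is_lim_seq_le _ _ _ _ (fun K => pairing_le_read_norm_plus xbar y K Hx Hy)
                   (is_lim_seq_const _) Hlim).
  simpl in Hle. lra.
Qed.

Definition test_functional (sg : R) (k0 : nat) (c : nat -> R) (J : nat) : nat -> R :=
  fun k => sg * unitvec k0 k + sum_n (fun n => c n * read_vec n k) J.

Lemma pairing_test_functional x sg k0 c J : in_linf x ->
  pairing x (test_functional sg k0 c J) =
  sg * x k0 + sum_n (fun n => c n * pairing x (read_vec n)) J.
Proof.
  intros Hx. assert (Hc : forall n, in_l1 (fun k => c n * read_vec n k))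
    by (intros n; apply in_l1_scal, read_vec_l1).
  unfold test_functional.
  rewrite pairing_plus, pairing_scal, pairing_unitvec, pairing_sum_n
    by auto using in_l1_scal, unitvec_l1, in_l1_sum_n.
  f_equal. apply sum_n_ext; intros n; apply pairing_scal.
Qed.

Lemma test_functional_dual_ball sg k0 c J :
  Rabs sg <= 1 -> (forall n, Rabs (c n) <= read_weight n) ->
  dual_ball u a (test_functional sg k0 c J).
Proof.
  intros Hsg Hc. split.
  - apply in_l1_plus; [apply in_l1_scal, unitvec_l1 |].
    apply in_l1_sum_n; intros n; apply in_l1_scal, read_vec_l1.
  - intros x Hx0. assert (Hx := in_c0_linf x Hx0).
    assert (Hs := fun k => supnorm_ge x k Hx).
    rewrite pairing_test_functional, read_norm_unfold by exact Hx.
    eapply Rle_trans; [apply Rabs_triang | apply Rplus_le_compat].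
    + rewrite Rabs_mult. pose proof (Rabs_pos sg). pose proof (Rabs_pos (x k0)).
      specialize (Hs k0). nra.
    + apply Rle_trans with (sum_n (read_term x) J).
      * apply Rabs_sum_n_le; intros n; unfold read_term; rewrite Rabs_mult.
        apply Rmult_le_compat_r; [apply Rabs_pos | apply Hc].
      * apply sum_n_le_Series; [| exact (ex_series_read_term x _ Hs)].
        intros n; exact (proj1 (read_term_bound x _ n Hs)).
Qed.

Lemma read_norm_approx xbar d : in_linf xbar -> 0 < d ->
  exists y, dual_ball u a y /\ read_norm u a xbar - d < Rabs (pairing xbar y).
Proof.
  intros Hx Hd.
  destruct (is_lub_Rbar_approx _ _ (d / 2) (is_lub_supnorm xbar Hx)) as [r [[k0 ->] Hk0]];
    [lra |].
  assert (Hsum := is_lim_seq_sum_n_Series _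
                    (ex_series_read_term xbar _ (fun k => supnorm_ge xbar k Hx))).
  destruct (proj2 (is_lim_seq_spec _ _) Hsum (mkposreal (d / 2) ltac:(lra))) as [J HJ].
  specialize (HJ J (le_n J)); simpl in HJ.
  set (c := fun n => sign (pairing xbar (read_vec n)) * read_weight n).
  exists (test_functional (sign (xbar k0)) k0 c J); split.
  - apply test_functional_dual_ball; [apply Rabs_sign_le_1 |].
    intros n; unfold c. assert (Hw : 0 < read_weight n) by (apply pow_lt; lra).
    rewrite Rabs_mult, (Rabs_pos_eq (read_weight n)) by lra.
    pose proof (Rabs_sign_le_1 (pairing xbar (read_vec n))). nra.
  - assert (Hterm : forall n, c n * pairing xbar (read_vec n) = read_term xbar n)
      by (intros n; unfold c, read_term; rewrite <- sign_mul_self; ring).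
    rewrite pairing_test_functional, sign_mul_self, (sum_n_ext _ _ J Hterm) by exact Hx.
    rewrite read_norm_unfold. apply Rabs_def2 in HJ.
    eapply Rlt_le_trans; [| apply Rle_abs]. lra.
Qed.

End ReadNorm.

Theorem proposition2p1 (u : nat -> nat -> R) (a : nat -> nat) :
  read_data u a ->
  forall xbar : nat -> R, in_linf xbar ->
    bidual_norm u a xbar = Finite (read_norm u a xbar).
Proof.
  intros (_ & _ & a_pos & a_incr & u_supp & u_l1_lt) xbar Hx.
  apply is_lub_Rbar_unique, is_lub_Rbar_of_approx.
  - intros r [y [Hy ->]]. eapply pairing_le_read_norm; eassumption.
  - intros d Hd. destruct (read_norm_approx u a a_pos a_incr u_supp u_l1_lt xbar d Hx Hd)
      as [y [Hy Hlt]].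
    exists (Rabs (pairing xbar y)); eauto.
Qed.
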